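(* Let $m\ge1$, $n=2^m-1$ and $\iota\in\dot F^m$. For every $\bar z\in F^n$ it holds that $\Omega(R_\iota+\bar z)=\Omega(R_\iota+\bar z+\bar e^{(\iota)})$.
   Context: $F^m$ denotes the vector space of binary $m$-tuples over $GF(2)$, and $\dot F^m := F^m\setminus\{0^m\}$. The coordinates of words $\bar w\in F^n$ ($n=2^m-1$) are indexed by the elements of $\dot F^m$, $\bar w=\{w_\alpha\}_{\alpha\in\dot F^m}$ (in some fixed order). $\bar e^{(\iota)}\in F^n$ is the word with a single $1$ in the coordinate indexed by $\iota$. The Hamming code is $H:=\{\bar c\in F^n \mid \sum_{\alpha\in\dot F^m} c_\alpha\alpha = 0^m\}$. For $\iota\in\dot F^m$, $R_\iota := \{\bar c\in H \mid c_\alpha=c_{\alpha+\iota} \text{ for all } \alpha\in F^m\setminus\{0^m,\iota\}\}$. For $M\subset F^n$, $\Omega(M)$ is the set of words at Hamming distance at most $1$ from some element of $M$. *)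

From mathcomp Require Import all_boot all_order all_algebra.
Set Implicit Arguments. Unset Strict Implicit. Unset Printing Implicit Defensive.
Import GRing.Theory.
Local Open Scope ring_scope.

Definition Fm (m : nat) := 'rV['F_2]_m.
Notation Fdot m := {a : 'rV['F_2]_m | a != 0}.
(* words of length n = 2^m - 1, coordinates indexed by \dot F^m *)
Notation word m := {ffun Fdot m -> 'F_2}.

Definition e_unit (m : nat) (iota : Fdot m) : word m :=
  [ffun a => if a == iota then 1 else 0].

Definition hamming (m : nat) : {set word m} :=
  [set c : word m | \sum_(a : Fdot m) c a *: val a == 0].

Definition R_iota (m : nat) (iota : Fdot m) : {set word m} :=
  [set c in hamming m | [forall a : Fdot m, forall b : Fdot m,
      (a != iota) ==> (val b == val a + val iota) ==> (c a == c b)]].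

Definition hdist (m : nat) (u v : word m) : nat := #|[set a | u a != v a]|.

Definition Omega (m : nat) (M : {set word m}) : {set word m} :=
  [set w : word m | [exists c in M, hdist w c <= 1]%N].

Definition transl (m : nat) (M : {set word m}) (z : word m) : {set word m} :=
  [set (c + z : word m) | c : word m in M].

From mathcomp Require Import all_boot all_order all_algebra.
Set Implicit Arguments. Unset Strict Implicit. Unset Printing Implicit Defensive.
Local Open Scope ring_scope.
Import GRing.Theory.

(* Distance is translation invariant, so [Omega (R_iota + z) = Omega R_iota + z]
   and the claim reduces to the invariance of [Omega R_iota] under adding
   [e_iota].  Only the words [c + e_b] with [c] in [R_iota] and [b <> iota]
   need an argument: for [b' = b + iota], the word [e_iota + e_b + e_b'] has
   syndrome [0] and is [iota]-symmetric, so [c' = c + e_iota + e_b + e_b']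
   lies in [R_iota], and [c + e_b + e_iota = c' + e_b']. *)

Lemma F2_addrr (x : 'F_2) : x + x = 0.
Proof. exact: addrr_pchar2 (pchar_Fp (isT : prime 2)) x. Qed.

Lemma F2_neq_addr1 (x y : 'F_2) : x != y -> x = y + 1.
Proof. by move: x y => [[|[|//]] ?] [[|[|//]] ?] neq; apply/eqP. Qed.

Lemma ffun_F2_addrK (aT : finType) (f g : {ffun aT -> 'F_2}) : f + g + g = f.
Proof. by apply/ffunP => a; rewrite !ffunE -addrA F2_addrr addr0. Qed.

Lemma row_F2_addrr n (v : 'rV['F_2]_n) : v + v = 0.
Proof. by apply/rowP => i; rewrite !mxE F2_addrr. Qed.

Lemma row_F2_addrK n (u v : 'rV['F_2]_n) : u + v + v = u.
Proof. by rewrite -addrA row_F2_addrr addr0. Qed.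

Section HammingBalls.

Variable m : nat.
Implicit Types (c d u v w z : word m) (M : {set word m}) (iota b : Fdot m).

Lemma mem_transl M z w : (w \in transl M z) = (w + z \in M).
Proof.
apply/imsetP/idP => [[c cM ->]|wzM]; first by rewrite ffun_F2_addrK.
by exists (w + z); rewrite ?ffun_F2_addrK.
Qed.

Lemma transl_transl M z z' : transl (transl M z) z' = transl M (z + z').
Proof. by apply/setP => w; rewrite !mem_transl addrA addrAC. Qed.

Lemma hdist_addr u v z : hdist (u + z) (v + z) = hdist u v.
Proof.
by rewrite /hdist; apply: eq_card => a; rewrite !inE !ffunE (inj_eq (addIr _)).
Qed.

Lemma hdist_le1P u v :
  reflect (u = v \/ exists b, u = v + e_unit b) (hdist u v <= 1)%N.
Proof.
apply: (iffP idP) => [le1|[->|[b ->]]]; last 2 first.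
- by apply/card_le1_eqP => a a'; rewrite !inE eqxx.
- apply/card_le1_eqP => a a'; rewrite !inE !ffunE.
  by case: (a =P b) => [->|_]; case: (a' =P b) => [->|_]; rewrite ?addr0 ?eqxx.
case: (set0Pn [set a | u a != v a]) => [[b]|empty].
  rewrite inE => neq_b; right; exists b; apply/ffunP => a; rewrite !ffunE.
  have [->|nab] := eqVneq a b; first exact: F2_neq_addr1.
  rewrite addr0; apply/eqP; apply: contraNT nab => neq_a.
  by apply/eqP; apply: (card_le1_eqP le1); rewrite inE.
left; apply/ffunP => a; apply/eqP; apply: contraT => neq_a.
by case: empty; exists a; rewrite inE.
Qed.

Lemma OmegaP M w :
  reflect (exists2 c, c \in M & w = c \/ exists b, w = c + e_unit b)
          (w \in Omega M).
Proof.
rewrite inE; apply: (iffP existsP) => [[c /andP[cM /hdist_le1P]]|[c cM]].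
  by exists c.
by move/hdist_le1P => hwc; exists c; rewrite cM.
Qed.

Lemma Omega_transl M z : Omega (transl M z) = transl (Omega M) z.
Proof.
apply/setP => w; rewrite mem_transl !inE.
apply/existsP/existsP => [[c /andP[cMz hwc]]|[c /andP[cM hwc]]].
  by exists (c + z); rewrite -mem_transl cMz hdist_addr.
exists (c + z); rewrite mem_transl ffun_F2_addrK cM /=.
by rewrite -(hdist_addr w _ z) ffun_F2_addrK.
Qed.

Definition syndrome (c : word m) : 'rV['F_2]_m := \sum_(a : Fdot m) c a *: val a.

Lemma mem_hamming c : (c \in hamming m) = (syndrome c == 0).
Proof. by rewrite inE. Qed.

Lemma syndromeD c d : syndrome (c + d) = syndrome c + syndrome d.
Proof.
by rewrite /syndrome -big_split; apply: eq_bigr => a _; rewrite ffunE scalerDl.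
Qed.

Lemma syndrome_e_unit b : syndrome (e_unit b) = val b.
Proof.
rewrite /syndrome (bigD1 b) //= big1 => [|a /negPf nab].
  by rewrite ffunE eqxx scale1r addr0.
by rewrite ffunE nab scale0r.
Qed.

Lemma Fdot_addr_neq0 (a b : Fdot m) : a != b -> val a + val b != 0.
Proof.
apply: contraNneq => /addr0_eq hab; apply/eqP/val_inj.
by rewrite /= -hab (addr0_eq (row_F2_addrr (val a))).
Qed.

Lemma R_iotaP iota c :
  reflect (c \in hamming m /\ forall a b : Fdot m,
             a != iota -> val b = val a + val iota -> c a = c b)
          (c \in R_iota iota).
Proof.
rewrite [X in reflect _ X]in_set.
apply: (iffP andP) => [[cH /forallP cS]|[cH cS]]; split => //.
  move=> a b nai hb; apply/eqP.
  by move/forallP: (cS a) => /(_ b); rewrite nai hb eqxx.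
apply/forallP => a; apply/forallP => b; apply/implyP => nai.
by apply/implyP => /eqP hb; apply/eqP/cS.
Qed.

Lemma R_iota_addr iota c d :
  c \in R_iota iota -> d \in R_iota iota -> c + d \in R_iota iota.
Proof.
move=> /R_iotaP[cH cS] /R_iotaP[dH dS]; apply/R_iotaP; split.
  by move: cH dH; rewrite !mem_hamming syndromeD => /eqP-> /eqP->; rewrite addr0.
by move=> a b nai hb; rewrite !ffunE (cS a b) ?(dS a b).
Qed.

Lemma e_unit_triple_in_R_iota iota b (b' : Fdot m) :
  val b' = val b + val iota ->
  e_unit iota + e_unit b + e_unit b' \in R_iota iota.
Proof.
move=> hb'; apply/R_iotaP; split.
  rewrite mem_hamming !syndromeD !syndrome_e_unit hb'.
  by rewrite (addrC (val b)) row_F2_addrr.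
move=> a d nai hd; rewrite !ffunE.
have ndi : (d == iota) = false.
  apply/negbTE/eqP => di; move: hd; rewrite di -{1}[val iota]add0r => /addIr a0.
  by move: (valP a); rewrite -a0 eqxx.
have -> : (a == b) = (d == b').
  by rewrite -[a == _]val_eqE -[d == _]val_eqE hd hb' (inj_eq (addIr _)).
have -> : (a == b') = (d == b).
  rewrite -[a == _]val_eqE -[d == _]val_eqE hd hb'.
  by rewrite -(inj_eq (addIr (val iota))) row_F2_addrK.
by rewrite (negPf nai) ndi !add0r addrC.
Qed.

Lemma Omega_R_iota_addr_e iota w :
  w \in Omega (R_iota iota) -> w + e_unit iota \in Omega (R_iota iota).
Proof.
case/OmegaP => c cR [->|[b ->]].
  by apply/OmegaP; exists c => //; right; exists iota.
have [->|nbi] := eqVneq b iota.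
  by apply/OmegaP; exists c => //; left; rewrite ffun_F2_addrK.
pose b' : Fdot m := exist _ (val b + val iota) (Fdot_addr_neq0 nbi).
apply/OmegaP; exists (c + (e_unit iota + e_unit b + e_unit b')).
  exact: R_iota_addr cR (e_unit_triple_in_R_iota _).
right; exists b'.
by rewrite -[RHS]addrA ffun_F2_addrK -addrA (addrC (e_unit b)).
Qed.

Lemma transl_Omega_R_iota iota :
  transl (Omega (R_iota iota)) (e_unit iota) = Omega (R_iota iota).
Proof.
apply/setP => w; rewrite mem_transl.
apply/idP/idP => [/Omega_R_iota_addr_e|/Omega_R_iota_addr_e //].
by rewrite ffun_F2_addrK.
Qed.

End HammingBalls.

Theorem lemma1 (m : nat) (hm : (1 <= m)%N) (iota : Fdot m) (z : word m) :
  Omega (transl (R_iota iota) z) = Omega (transl (R_iota iota) (z + e_unit iota)).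
Proof.
by rewrite !Omega_transl -[in LHS](transl_Omega_R_iota iota) transl_transl addrC.
Qed.
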